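(* Let $\eta\in(0,1)$. Let $\mathbf{w}_0$ be such that $\xi_{01}\neq0$, and suppose that for each $t\ge0$ the vector $\mathbf{w}_{t+1}$ approximately minimizes $f_{t+1}$ so accurately that $\epsilon_t:=\frac{f_{t+1}(\mathbf{w}_{t+1})-f_{t+1}^*}{\mathbf{w}_t^\top\widehat{\mathbf{B}}\mathbf{w}_t}\le\min\Big(\sum_{i=2}^d\xi_{ti}^2/\beta_i,\ \xi_{t1}^2/\beta_1\Big)\cdot\frac{(\beta_1-\beta_2)^2}{32}.$ Let $T=\lceil\log_{7/5}(G(\mathbf{r}_0)/\eta)\rceil$. Then $|\sin\theta_t|\le G(\mathbf{r}_t)\le\eta$ for all $t\ge T$.
   Context: Given samples $(\mathbf{x}_i,\mathbf{y}_i)_{i=1}^N$ in $\mathbb{R}^{d_x}\times\mathbb{R}^{d_y}$, $d=d_x+d_y$, let $\widehat{\Sigma}_{xx}=\frac1N\sum\mathbf{x}_i\mathbf{x}_i^\top$, $\widehat{\Sigma}_{yy}=\frac1N\sum\mathbf{y}_i\mathbf{y}_i^\top$ (assumed positive definite), $\widehat{\Sigma}_{xy}=\frac1N\sum\mathbf{x}_i\mathbf{y}_i^\top$, $\widehat{\mathbf{T}}=\widehat{\Sigma}_{xx}^{-1/2}\widehat{\Sigma}_{xy}\widehat{\Sigma}_{yy}^{-1/2}$ with singular values $\widehat\rho_1\ge\widehat\rho_2\ge\cdots$ and gap $\widehat\Delta=\widehat\rho_1-\widehat\rho_2>0$, top unit singular pair $(\widehat{\mathbf{a}}_1,\widehat{\mathbf{b}}_1)$,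 $\widehat{\mathbf{u}}=\widehat{\Sigma}_{xx}^{-1/2}\widehat{\mathbf{a}}_1$, $\widehat{\mathbf{v}}=\widehat{\Sigma}_{yy}^{-1/2}\widehat{\mathbf{b}}_1$. Let $\lambda$ satisfy $\lambda-\widehat\rho_1\in[l\widehat\Delta,u\widehat\Delta]$ with $0<l<u<1$. Define $\widehat{\mathbf{C}}=\begin{bmatrix}\mathbf{0}&\widehat{\mathbf{T}}\\ \widehat{\mathbf{T}}^\top&\mathbf{0}\end{bmatrix}$, $\widehat{\mathbf{M}}_\lambda=(\lambda\mathbf{I}-\widehat{\mathbf{C}})^{-1}$, $\widehat{\mathbf{A}}_\lambda=\begin{bmatrix}\lambda\widehat{\Sigma}_{xx}&-\widehat{\Sigma}_{xy}\\-\widehat{\Sigma}_{xy}^\top&\lambda\widehat{\Sigma}_{yy}\end{bmatrix}$, $\widehat{\mathbf{B}}=\mathrm{diag}(\widehat{\Sigma}_{xx},\widehat{\Sigma}_{yy})$, so that $\widehat{\mathbf{M}}_\lambda=\widehat{\mathbf{B}}^{1/2}\widehat{\mathbf{A}}_\lambda^{-1}\widehat{\mathbf{B}}^{1/2}$. Let $\beta_1\ge\beta_2\ge\cdots\ge\beta_d>0$ be the eigenvalues of $\widehat{\mathbf{M}}_\lambda$ with orthonormal eigenvectors $\mathbf{p}_1,\dots,\mathbf{p}_d$, where $\mathbf{p}_1=\widehat{\mathbf{r}}:=\frac1{\sqrt2}[\widehat{\Sigma}_{xx}^{1/2}\widehat{\mathbf{u}};\widehat{\Sigma}_{yy}^{1/2}\widehat{\mathbf{v}}]$.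 For iterates $\mathbf{w}_t\in\mathbb{R}^d$ set $\mathbf{r}_t=\widehat{\mathbf{B}}^{1/2}\mathbf{w}_t$, $\xi_{ti}=\mathbf{r}_t^\top\mathbf{p}_i/\|\mathbf{r}_t\|$, $\theta_t$ the angle between $\mathbf{r}_t$ and $\widehat{\mathbf{r}}$, and $G(\mathbf{r}_t)=\sqrt{\sum_{i=2}^d\xi_{ti}^2/\beta_i}\big/\sqrt{\xi_{t1}^2/\beta_1}$. The least squares objective is $f_{t+1}(\mathbf{w})=\frac12\mathbf{w}^\top\widehat{\mathbf{A}}_\lambda\mathbf{w}-\mathbf{w}^\top\widehat{\mathbf{B}}\mathbf{w}_t$, with minimizer $\widehat{\mathbf{A}}_\lambda^{-1}\widehat{\mathbf{B}}\mathbf{w}_t$ and minimum value $f_{t+1}^*$. *)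

From HB Require Import structures.
From mathcomp Require Import all_boot all_order all_algebra.
From mathcomp Require Import all_classical all_reals all_analysis.
Set Implicit Arguments. Unset Strict Implicit. Unset Printing Implicit Defensive.
Import Order.TTheory GRing.Theory Num.Theory.
Local Open Scope ring_scope.

Section CCA.
Variable R : realType.

Definition posdef n (A : 'M[R]_n) : Prop :=
  A^T = A /\ forall v : 'cV[R]_n, v != 0 -> 0 < (v^T *m A *m v) 0 0.

Definition is_sqrtmx n (A S : 'M[R]_n) : Prop := posdef S /\ S *m S = A.

Definition orthogonalmx n (U : 'M[R]_n) : Prop := U^T *m U = 1%:M.

Definition vdot n (u v : 'cV[R]_n) : R := (u^T *m v) 0 0.
Definition vnorm n (u : 'cV[R]_n) : R := Num.sqrt (vdot u u).

Definition covmx N m k (a : 'I_N -> 'cV[R]_m) (b : 'I_N -> 'cV[R]_k)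
  : 'M[R]_(m, k) := N%:R^-1 *: \sum_(i < N) (a i *m (b i)^T).

Definition rdiagmx m k (sigma : nat -> R) : 'M[R]_(m, k) :=
  \matrix_(i < m, j < k) (if (i : nat) == (j : nat) then sigma i else 0).

(* SVD  T = U D V^T, U,V orthogonal, singular values sigma nonincreasing,
   nonnegative; sigma k = 0 for k >= min(m,k) (padding convention) *)
Definition is_svd m k (T : 'M[R]_(m, k)) (U : 'M[R]_m) (V : 'M[R]_k)
  (sigma : nat -> R) : Prop :=
  orthogonalmx U /\ orthogonalmx V /\
      T = U *m rdiagmx m k sigma *m V^T /\
      (forall i j, (i <= j)%N -> sigma j <= sigma i) /\
      (forall i, 0 <= sigma i) /\
      (forall i, (minn m k <= i)%N -> sigma i = 0).

Definition angle n (u v : 'cV[R]_n) : R :=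
  acos (vdot u v / (vnorm u * vnorm v)).

Definition xi n (P : 'M[R]_n) (r : 'cV[R]_n) (i : 'I_n) : R :=
  vdot r (col i P) / vnorm r.

(* G(r); beta indexed from 0 (paper index i <-> our index i-1) *)
Definition Gfun n (P : 'M[R]_n) (beta : nat -> R) (r : 'cV[R]_n) : R :=
  Num.sqrt (\sum_(i < n | (0 < (i : nat))%N) xi P r i ^+ 2 / beta i)
  / Num.sqrt (\sum_(i < n | (i : nat) == 0%N) xi P r i ^+ 2 / beta i).

Definition lsq n (A B : 'M[R]_n) (wt w : 'cV[R]_n) : R :=
  2^-1 * (w^T *m A *m w) 0 0 - (w^T *m B *m wt) 0 0.

End CCA.

(* Whitening by B^{1/2} turns each least-squares subproblem into one for
   lambda I - C, whose inverse M has the orthonormal eigenpairs (beta_i, p_i).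
   In the coordinates z_i = <r_t, p_i> an inexact step reads
   z'_i = beta_i z_i + c_i, and the weighted residual norm
   (sum_i c_i^2 / beta_i)^{1/2} equals (2 eps_t)^{1/2} |r_t|, since the excess
   value of the least-squares objective is half the (lambda I - C)-norm of the
   whitened residual.  The SVD of T gives beta_1 = 1 / (lambda - rho_1) and,
   for p_i orthogonal to p_1 = rh, beta_i <= 1 / (lambda - rho_2); the choice
   of lambda then yields beta_1 >= 2 beta_2.  With e = (beta_1 - beta_2) / 4
   the accuracy condition bounds the residual by e times both the numerator and
   the denominator of G, so by the triangle inequality the numerator grows by a
   factor at most beta_2 + e and the denominator by at least beta_1 - e, whence
   G(r_{t+1}) <= 5/7 G(r_t).  Finally |sin theta_t| <= G(r_t) because
   beta_i <= beta_1. *)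

From HB Require Import structures.
From mathcomp Require Import all_boot all_order all_algebra.
From mathcomp Require Import all_classical all_reals all_analysis.
From mathcomp Require Import ring lra.
Import Order.TTheory GRing.Theory Num.Theory.
Set Implicit Arguments. Unset Strict Implicit. Unset Printing Implicit Defensive.
Local Open Scope ring_scope.

Section WeightedNorm.
Variables (R : rcfType) (I : finType).

Lemma weighted_cauchy_schwarz (J : pred I) (w u v : I -> R) :
  (forall i, 0 <= w i) ->
  (\sum_(i | J i) u i * v i * w i) ^+ 2 <=
  (\sum_(i | J i) u i ^+ 2 * w i) * (\sum_(i | J i) v i ^+ 2 * w i).
Proof.
move=> w_ge0; rewrite -subr_ge0.
set X := \sum_(i | J i) u i ^+ 2 * _; set Y := \sum_(i | J i) v i ^+ 2 * _.
set Z := \sum_(i | J i) _.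
have -> : X * Y - Z ^+ 2 = (X * Y + Y * X - 2 * (Z * Z)) / 2 by field.
rewrite divr_ge0 // !big_distrlr mulr_sumr -big_split -sumrB /=.
apply: sumr_ge0 => i _; rewrite mulr_sumr -big_split -sumrB /=.
apply: sumr_ge0 => j _.
have -> : u i ^+ 2 * w i * (v j ^+ 2 * w j) + v i ^+ 2 * w i * (u j ^+ 2 * w j)
  - 2 * (u i * v i * w i * (u j * v j * w j)) =
  w i * w j * (u i * v j - u j * v i) ^+ 2 by ring.
by rewrite mulr_ge0 ?sqr_ge0 ?mulr_ge0.
Qed.

Variable b : I -> R.
Hypothesis b_gt0 : forall i, 0 < b i.

Definition wnorm (J : pred I) (v : I -> R) : R :=
  Num.sqrt (\sum_(i | J i) v i ^+ 2 / b i).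

Lemma wsum_ge0 (J : pred I) (v : I -> R) : 0 <= \sum_(i | J i) v i ^+ 2 / b i.
Proof. by apply: sumr_ge0 => i _; rewrite divr_ge0 ?sqr_ge0 ?(ltW (b_gt0 i)). Qed.

Lemma sqr_wnorm (J : pred I) (v : I -> R) :
  wnorm J v ^+ 2 = \sum_(i | J i) v i ^+ 2 / b i.
Proof. by rewrite sqr_sqrtr ?wsum_ge0. Qed.

Lemma wnormD (J : pred I) (u v : I -> R) :
  wnorm J (fun i => u i + v i) <= wnorm J u + wnorm J v.
Proof.
rewrite -(ler_pXn2r (_ : 0 < 2)%N) ?nnegrE ?addr_ge0 ?sqrtr_ge0 //.
rewrite sqrrD !sqr_wnorm.
set Z := \sum_(i | J i) u i * v i / b i.
have -> : \sum_(i | J i) (u i + v i) ^+ 2 / b i =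
          \sum_(i | J i) u i ^+ 2 / b i + \sum_(i | J i) v i ^+ 2 / b i + Z *+ 2.
  rewrite /Z -sumrMnl -!big_split /=; apply: eq_bigr => i _; ring.
rewrite addrAC lerD2r lerD2l lerMn2r /= -sqrtrM ?wsum_ge0 //.
rewrite (le_trans (ler_norm Z)) // -sqrtr_sqr ler_sqrt ?mulr_ge0 ?wsum_ge0 //.
by apply: weighted_cauchy_schwarz => i; rewrite invr_ge0 (ltW (b_gt0 i)).
Qed.

Lemma wnorm_le_scale (J : pred I) (u v : I -> R) (K : R) : 0 <= K ->
  (forall i, J i -> `|u i| <= K * `|v i|) -> wnorm J u <= K * wnorm J v.
Proof.
move=> K_ge0 uv; rewrite -[K]ger0_norm // -sqrtr_sqr -sqrtrM ?sqr_ge0 //.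
rewrite ler_sqrt ?mulr_ge0 ?sqr_ge0 ?wsum_ge0 // mulr_sumr ler_sum // => i Ji.
rewrite mulrA ler_pM2r ?invr_gt0 //.
rewrite -(real_normK (num_real (u i))) -(real_normK (num_real (v i))) -exprMn.
by rewrite lerXn2r ?nnegrE ?uv ?mulr_ge0.
Qed.

Lemma wnorm_subset (J J' : pred I) (v : I -> R) :
  (forall i, J i -> J' i) -> wnorm J v <= wnorm J' v.
Proof.
move=> JJ'; rewrite ler_sqrt ?wsum_ge0 // [leRHS](bigID J) /=.
have -> : \sum_(i | J' i && J i) v i ^+ 2 / b i = \sum_(i | J i) v i ^+ 2 / b i.
  by apply: eq_bigl => i; rewrite andb_idl //; apply: JJ'.
by rewrite lerDl wsum_ge0.
Qed.

Lemma wnorm_pred1 (J : pred I) (o : I) (v : I -> R) :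
  J =1 pred1 o -> wnorm J v = `|v o| / Num.sqrt (b o).
Proof.
move=> Jo; rewrite /wnorm (big_pred1 o) // sqrtrM ?sqr_ge0 // sqrtr_sqr.
by rewrite sqrtrV ?(ltW (b_gt0 o)).
Qed.

Lemma wnormMr (J : pred I) (v : I -> R) (k : R) :
  wnorm J (fun i => v i * k) = wnorm J v * `|k|.
Proof.
rewrite /wnorm -sqrtr_sqr -sqrtrM ?wsum_ge0 // mulr_suml.
by congr Num.sqrt; apply: eq_bigr => i _; rewrite exprMn mulrAC.
Qed.

End WeightedNorm.

Section GapRatio.
Variables (R : rcfType) (n : nat) (b : 'I_n.+1 -> R).
Hypothesis b_gt0 : forall i, 0 < b i.

Local Notation tail := (fun i : 'I_n.+1 => (0 < i)%N).
Local Notation head := (fun i : 'I_n.+1 => (i : nat) == 0%N).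

Definition Gratio (z : 'I_n.+1 -> R) : R := wnorm b tail z / wnorm b head z.

Lemma sum_ord_head_tail (F : 'I_n.+1 -> R) :
  \sum_i F i = F 0 + \sum_(i | tail i) F i.
Proof.
rewrite (bigD1 0) //=; congr (_ + _); apply: eq_bigl => i.
by rewrite lt0n -val_eqE.
Qed.

Lemma wnorm_head (z : 'I_n.+1 -> R) : wnorm b head z = `|z 0| / Num.sqrt (b 0).
Proof. by apply: wnorm_pred1 => // i /=; rewrite -val_eqE. Qed.

Lemma sqr_wnorm_head (z : 'I_n.+1 -> R) : wnorm b head z ^+ 2 = z 0 ^+ 2 / b 0.
Proof. by rewrite sqr_wnorm // (big_pred1 0) // => i /=; rewrite -val_eqE. Qed.

Lemma wnorm_head_gt0 (z : 'I_n.+1 -> R) : z 0 != 0 -> 0 < wnorm b head z.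
Proof. by move=> z0; rewrite wnorm_head divr_gt0 ?normr_gt0 ?sqrtr_gt0. Qed.

Lemma Gratio_scale (z : 'I_n.+1 -> R) (k : R) :
  k != 0 -> Gratio (fun i => z i * k) = Gratio z.
Proof.
move=> k0; rewrite /Gratio !wnormMr // invfM mulrACA divff ?normr_eq0 //.
by rewrite mulr1.
Qed.

Lemma Gratio_contract (b1 : R) (z c : 'I_n.+1 -> R) :
  0 <= b1 -> (forall i, tail i -> b i <= b1) -> 2 * b1 <= b 0 -> z 0 != 0 ->
  wnorm b predT c <= (b 0 - b1) / 4 * Num.min (wnorm b tail z) (wnorm b head z) ->
  b 0 * z 0 + c 0 != 0 /\ Gratio (fun i => b i * z i + c i) <= 5 / 7 * Gratio z.
Proof.
move=> b1_ge0 b_tail gap z0 c_small; set e := (b 0 - b1) / 4.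
set Nt := wnorm b tail z; set Nh := wnorm b head z.
have b0_gt0 := b_gt0 0.
have e_ge0 : 0 <= e by rewrite divr_ge0 //; lra.
have Nt_ge0 : 0 <= Nt := sqrtr_ge0 _.
have Nh_gt0 : 0 < Nh := wnorm_head_gt0 z0.
have c_tail : wnorm b tail c <= e * Nt.
  apply: le_trans (wnorm_subset b_gt0 c _) (le_trans c_small _) => //.
  by apply: ler_wpM2l => //; rewrite ge_min lexx.
have c_head : `|c 0| / Num.sqrt (b 0) <= e * Nh.
  rewrite -wnorm_head; apply: le_trans (wnorm_subset b_gt0 c _) (le_trans c_small _) => //.
  by apply: ler_wpM2l => //; rewrite ge_min lexx orbT.
have num_le : wnorm b tail (fun i => b i * z i + c i) <= (b1 + e) * Nt.
  rewrite mulrDl; apply: le_trans (wnormD b_gt0 _ _ _) (lerD _ c_tail) => //.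
  apply: (wnorm_le_scale b_gt0) => // i /b_tail bi.
  by rewrite normrM (gtr0_norm (b_gt0 i)) ler_wpM2r.
have den_ge : (b 0 - e) * Nh <= wnorm b head (fun i => b i * z i + c i).
  rewrite [leRHS]wnorm_head mulrBl; apply: le_trans (lerB (lexx _) c_head) _.
  rewrite [Nh]wnorm_head mulrA -mulrBl.
  apply: ler_wpM2r; first by rewrite invr_ge0 sqrtr_ge0.
  have := lerB_dist (b 0 * z 0) (- c 0).
  by rewrite normrM (gtr0_norm (b_gt0 _)) normrN opprK.
have den_gt0 : 0 < wnorm b head (fun i => b i * z i + c i).
  by apply: lt_le_trans den_ge; rewrite mulr_gt0 // /e; lra.
split.
  by move: den_gt0; rewrite wnorm_head pmulr_lgt0 ?invr_gt0 ?sqrtr_gt0 // normr_gt0.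
rewrite /Gratio -/Nt -/Nh ler_pdivrMr //; apply: le_trans num_le _.
apply: le_trans (ler_wpM2l _ den_ge); last by rewrite mulr_ge0 ?divr_ge0 ?(ltW Nh_gt0).
have -> : 5 / 7 * (Nt / Nh) * ((b 0 - e) * Nh) = 5 / 7 * (b 0 - e) * Nt.
  by field; apply: lt0r_neq0.
(* [b1 + e <= 5/7 (b 0 - e)] is exactly [2 b1 <= b 0]. *)
by apply: ler_wpM2r => //; rewrite /e; lra.
Qed.

Lemma sqrt_one_sub_le_Gratio (z : 'I_n.+1 -> R) :
  (forall i, b i <= b 0) -> \sum_i z i ^+ 2 = 1 -> z 0 != 0 ->
  Num.sqrt (1 - z 0 ^+ 2) <= Gratio z.
Proof.
move=> b_le unit_z z0.
have z0_le1 : `|z 0| <= 1.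
  have : z 0 ^+ 2 <= 1.
    rewrite -unit_z sum_ord_head_tail lerDl.
    by apply: sumr_ge0 => i _; apply: sqr_ge0.
  by rewrite -(real_normK (num_real (z 0))) expr_le1.
rewrite /Gratio wnorm_head invf_div mulrA ler_pdivlMr ?normr_gt0 //.
apply: le_trans (ler_piMr (sqrtr_ge0 _) z0_le1) _.
rewrite -unit_z sum_ord_head_tail addrAC subrr add0r mulrC -sqrtrM ?(ltW (b_gt0 0)) //.
rewrite ler_sqrt ?mulr_ge0 ?wsum_ge0 ?(ltW (b_gt0 0)) // mulr_sumr ler_sum // => i _.
by rewrite mulrCA ler_peMr ?sqr_ge0 // ler_pdivlMr // mul1r.
Qed.

End GapRatio.

Section VectorForms.
Variable R : realType.

Lemma vdotE n (u v : 'cV[R]_n) : vdot u v = \sum_k u k 0 * v k 0.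
Proof. by rewrite /vdot mxE; apply: eq_bigr => k _; rewrite mxE. Qed.

Lemma vdotC n (u v : 'cV[R]_n) : vdot u v = vdot v u.
Proof. by rewrite !vdotE; apply: eq_bigr => k _; rewrite mulrC. Qed.

Lemma vdotDl n (u u' v : 'cV[R]_n) : vdot (u + u') v = vdot u v + vdot u' v.
Proof. by rewrite /vdot linearD /= mulmxDl mxE. Qed.

Lemma vdotZl n (c : R) (u v : 'cV[R]_n) : vdot (c *: u) v = c * vdot u v.
Proof. by rewrite /vdot linearZ /= -scalemxAl mxE. Qed.

Lemma vdot_col_mx m k (a a' : 'cV[R]_m) (b b' : 'cV[R]_k) :
  vdot (col_mx a b) (col_mx a' b') = vdot a a' + vdot b b'.
Proof. by rewrite /vdot tr_col_mx mul_row_col mxE. Qed.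

Lemma vdot_ge0 n (u : 'cV[R]_n) : 0 <= vdot u u.
Proof. by rewrite vdotE sumr_ge0 // => k _; rewrite -expr2 sqr_ge0. Qed.

Lemma sqr_vnorm n (u : 'cV[R]_n) : vnorm u ^+ 2 = vdot u u.
Proof. exact: sqr_sqrtr (vdot_ge0 u). Qed.

Lemma vdot_gt0 n (u : 'cV[R]_n) : u != 0 -> 0 < vdot u u.
Proof.
have sq_ge0 k : 0 <= u k 0 * u k 0 by rewrite -expr2 sqr_ge0.
move=> u0; rewrite vdotE lt_def sumr_ge0 ?andbT //.
apply: contra u0 => /eqP /(psumr_eq0P (fun k _ => sq_ge0 k)) u2_0.
apply/eqP/matrixP => i j; rewrite (ord1 j) mxE; apply/eqP.
by rewrite -(orbb (u i 0 == 0)) -mulf_eq0 u2_0.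
Qed.

Lemma orthomx_mulC n (P : 'M[R]_n) : orthogonalmx P -> P *m P^T = 1%:M.
Proof. exact: mulmx1C. Qed.

Lemma vdot_orthomx_tr m (U : 'M[R]_m) (a : 'cV_m) :
  orthogonalmx U -> vdot (U^T *m a) (U^T *m a) = vdot a a.
Proof.
move=> oU; rewrite /vdot trmx_mul trmxK mulmxA -(mulmxA _ U) orthomx_mulC //.
by rewrite mulmx1.
Qed.

Lemma vdot_cols_orthomx n (P : 'M[R]_n) (i j : 'I_n) :
  orthogonalmx P -> vdot (col i P) (col j P) = (i == j)%:R.
Proof.
move=> oP; move/matrixP: oP => /(_ i j); rewrite !mxE => <-.
by rewrite vdotE; apply: eq_bigr => k _; rewrite !mxE.
Qed.

Lemma form_eigenbasis n (P X : 'M[R]_n) (g : 'I_n -> R) (v : 'cV[R]_n) :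
  orthogonalmx P -> (forall i, X *m col i P = g i *: col i P) ->
  (v^T *m X *m v) 0 0 = \sum_i g i * vdot v (col i P) ^+ 2.
Proof.
move=> oP eigX.
have XP : X *m P = P *m diag_mx (\row_i g i).
  apply/matrixP => i j; rewrite mul_mx_diag !mxE.
  move/matrixP: (eigX j) => /(_ i 0); rewrite !mxE mulrC => <-.
  by apply: eq_bigr => k _; rewrite !mxE.
have -> : v^T *m X *m v = (P^T *m v)^T *m diag_mx (\row_i g i) *m (P^T *m v).
  by rewrite trmx_mul trmxK -(mulmxA _ P) -XP !mulmxA -(mulmxA _ P) orthomx_mulC // mulmx1.
have coord j : (P^T *m v) j 0 = vdot v (col j P).
  by rewrite vdotE mxE; apply: eq_bigr => k _; rewrite !mxE mulrC.
rewrite mxE; apply: eq_bigr => j _.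
have coordT : (P^T *m v)^T 0 j = vdot v (col j P) by rewrite mxE coord.
by rewrite mul_mx_diag mxE coordT coord mxE; ring.
Qed.

Lemma vdot_parseval n (P : 'M[R]_n) (v : 'cV[R]_n) :
  orthogonalmx P -> vdot v v = \sum_i vdot v (col i P) ^+ 2.
Proof.
move=> oP; have -> : vdot v v = (v^T *m 1%:M *m v) 0 0 by rewrite mulmx1.
rewrite (@form_eigenbasis _ P _ (fun=> 1)) // => [|i]; last by rewrite mul1mx scale1r.
by apply: eq_bigr => i _; rewrite mul1r.
Qed.

Lemma form_posdef_unitmx n (S : 'M[R]_n) :
  (forall v : 'cV_n, v != 0 -> 0 < (v^T *m S *m v) 0 0) -> S \in unitmx.
Proof.
move=> Spos; rewrite unitmxE unitfE; apply/negP => /det0P [v v0 vS].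
have : v^T != 0 by apply: contra v0 => /eqP h; rewrite -[v]trmxK h trmx0.
by move/Spos; rewrite trmxK vS mul0mx mxE ltxx.
Qed.

Lemma lsq_sub_min n (A B : 'M[R]_n) (wt w wmin : 'cV[R]_n) :
  A^T = A -> A *m wmin = B *m wt ->
  lsq A B wt w - lsq A B wt wmin = 2^-1 * ((w - wmin)^T *m A *m (w - wmin)) 0 0.
Proof.
move=> As Awmin; rewrite /lsq -!(mulmxA _ B) -Awmin !mulmxA.
have sym : (wmin^T *m A *m w) 0 0 = (w^T *m A *m wmin) 0 0.
  have -> : wmin^T *m A *m w = (w^T *m A *m wmin)^T.
    by rewrite !trmx_mul trmxK As mulmxA.
  by rewrite mxE.
have -> : (w - wmin)^T *m A *m (w - wmin) = w^T *m A *m w - wmin^T *m A *m w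
    - (w^T *m A *m wmin - wmin^T *m A *m wmin).
  by rewrite mulmxBr [(w - wmin)^T]linearB /= !mulmxBl.
move: sym; set a := w^T *m A *m w; set b := wmin^T *m A *m w.
set c := w^T *m A *m wmin; set e := wmin^T *m A *m wmin.
by rewrite !mxE => ->; field.
Qed.

End VectorForms.

Section AntidiagonalForm.
Variable R : realType.

Lemma form_block_antidiag m k (T : 'M[R]_(m, k)) (a : 'cV_m) (b : 'cV_k) :
  ((col_mx a b)^T *m block_mx 0 T T^T 0 *m col_mx a b) 0 0 = 2 * (a^T *m T *m b) 0 0.
Proof.
rewrite tr_col_mx mul_row_block !mulmx0 addr0 add0r mul_row_col.
have -> : b^T *m T^T *m a = (a^T *m T *m b)^T by rewrite !trmx_mul trmxK mulmxA.
by rewrite mxE [_^T 0 0]mxE mulr2n mulrDl mul1r.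
Qed.

Lemma tr_block_antidiag m k (T : 'M[R]_(m, k)) :
  (block_mx 0 T T^T 0)^T = block_mx 0 T T^T 0.
Proof. by rewrite tr_block_mx !trmx0 trmxK. Qed.

Lemma sum_ord_eq_le1 (i k : nat) : \sum_(j < k) ((i == j)%:R : R) <= 1.
Proof.
rewrite (_ : \sum_(j < k) _ = (i < k)%:R); first by case: ltnP.
elim: k => [|k IHk]; first by rewrite big_ord0.
by rewrite big_ord_recr /= IHk ltnS; case: ltngtP => _ /=; rewrite ?addr0 ?add0r.
Qed.

Lemma form_rdiag_le m k (a : 'cV[R]_m) (b : 'cV[R]_k) (s : nat -> R) (K : R) :
  0 <= K ->
  (forall (i : 'I_m) (j : 'I_k), i = j :> nat ->
     2 * (a i 0 * s i * b j 0) <= K * (a i 0 ^+ 2 + b j 0 ^+ 2)) ->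
  2 * (a^T *m rdiagmx m k s *m b) 0 0 <= K * (vdot a a + vdot b b).
Proof.
move=> K_ge0 diag_le; pose E (i : 'I_m) (j : 'I_k) : R := ((i : nat) == j)%:R.
have -> : (a^T *m rdiagmx m k s *m b) 0 0 =
          \sum_j \sum_i a i 0 * rdiagmx m k s i j * b j 0.
  rewrite mxE; apply: eq_bigr => j _; rewrite mxE mulr_suml.
  by apply: eq_bigr => i _; rewrite mxE.
rewrite mulr_sumr.
apply: le_trans (_ : \sum_j \sum_i K * (E i j * a i 0 ^+ 2 + E i j * b j 0 ^+ 2) <= _).
  apply: ler_sum => j _; rewrite mulr_sumr; apply: ler_sum => i _.
  rewrite /E mxE; case: eqP => [ij|_]; first by rewrite !mul1r diag_le.
  by rewrite !(mulr0, mul0r, addr0).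
under eq_bigr do rewrite -mulr_sumr.
rewrite -mulr_sumr; apply: ler_wpM2l => //.
under eq_bigr do rewrite big_split /=.
rewrite big_split !vdotE /=; apply: lerD.
- rewrite exchange_big /=; apply: ler_sum => i _; rewrite -mulr_suml -expr2.
  by rewrite ler_piMl ?sqr_ge0 ?sum_ord_eq_le1.
- apply: ler_sum => j _; rewrite -mulr_suml -expr2 ler_piMl ?sqr_ge0 //.
  by rewrite /E; under eq_bigr do rewrite eq_sym; apply: sum_ord_eq_le1.
Qed.

End AntidiagonalForm.

Lemma weighted_amgm (R : realFieldType) (a b s K : R) :
  0 <= s <= K -> 2 * (a * s * b) <= K * (a ^+ 2 + b ^+ 2).
Proof.
case/andP=> s_ge0 sK.
have : 0 <= s * (a - b) ^+ 2 + (K - s) * (a ^+ 2 + b ^+ 2).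
  by apply: addr_ge0; apply: mulr_ge0; rewrite ?subr_ge0 ?addr_ge0 ?sqr_ge0.
lra.
Qed.

Lemma tr_mul_coord (R : realType) n (W : 'M[R]_n) (y : 'cV[R]_n) i :
  (W^T *m y) i 0 = vdot y (col i W).
Proof. by rewrite vdotE mxE; apply: eq_bigr => k _; rewrite !mxE mulrC. Qed.

Section TopSingularPair.
Variables (R : realType) (m k : nat) (T : 'M[R]_(m.+1, k.+1)).
Variables (U : 'M[R]_m.+1) (V : 'M[R]_k.+1) (rho : nat -> R).
Hypothesis svdT : is_svd T U V rho.

Local Notation C := (block_mx 0 T T^T 0).
Local Notation e := ((Num.sqrt 2)^-1 *: col_mx (col 0 U) (col 0 V)).

Lemma form_antidiag_svd (x : 'cV[R]_(m.+1 + k.+1)) :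
  (x^T *m C *m x) 0 0 =
  2 * ((U^T *m usubmx x)^T *m rdiagmx m.+1 k.+1 rho *m (V^T *m dsubmx x)) 0 0.
Proof.
case: svdT => _ [_ [-> _]].
by rewrite -[x]vsubmxK form_block_antidiag col_mxKu col_mxKd trmx_mul trmxK !mulmxA.
Qed.

Lemma vdot_svd_coords (x : 'cV[R]_(m.+1 + k.+1)) :
  vdot x x = vdot (U^T *m usubmx x) (U^T *m usubmx x)
             + vdot (V^T *m dsubmx x) (V^T *m dsubmx x).
Proof. by case: svdT => oU [oV _]; rewrite !vdot_orthomx_tr // -vdot_col_mx vsubmxK. Qed.

Lemma form_antidiag_le (x : 'cV[R]_(m.+1 + k.+1)) :
  (x^T *m C *m x) 0 0 <= rho 0%N * vdot x x.
Proof.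
case: svdT => _ [_ [_ [rho_dec [rho_ge0 _]]]].
rewrite form_antidiag_svd vdot_svd_coords; apply: form_rdiag_le => // i j _.
by apply: weighted_amgm; rewrite rho_ge0 rho_dec.
Qed.

Lemma form_antidiag_top : (e^T *m C *m e) 0 0 = rho 0%N.
Proof.
have [oU [oV _]] := svdT.
have top_coord n (W : 'M[R]_n.+1) : orthogonalmx W -> W^T *m col 0 W = delta_mx 0 0.
  by move=> oW; rewrite colE mulmxA oW mul1mx.
rewrite form_antidiag_svd scale_col_mx col_mxKu col_mxKd -!scalemxAr !top_coord //.
rewrite linearZ /= trmx_delta -!scalemxAl -rowE -colE scalerA !mxE /=.
by rewrite -invfM -expr2 sqr_sqrtr ?ler0n // mulrA mulfV ?pnatr_eq0 // mul1r.
Qed.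

Lemma form_antidiag_orth_le (x : 'cV[R]_(m.+1 + k.+1)) :
  vdot x e = 0 -> (x^T *m C *m x) 0 0 <= rho 1%N * vdot x x.
Proof.
case: svdT => _ [_ [_ [rho_dec [rho_ge0 _]]]] x_orth.
rewrite form_antidiag_svd vdot_svd_coords; apply: form_rdiag_le => // i j /= ij.
rewrite !tr_mul_coord; case: (posnP i) => [i0|i_gt0].
  (* orthogonality to [e] makes the two top coordinates opposite *)
  have -> : vdot (dsubmx x) (col j V) = - vdot (usubmx x) (col i U).
    move: x_orth; rewrite -[x]vsubmxK vdotC vdotZl vdot_col_mx col_mxKu col_mxKd.
    have [-> ->] : i = 0 /\ j = 0 by split; apply: val_inj; rewrite /= -?ij.
    rewrite [vdot (col 0 U) _]vdotC [vdot (col 0 V) _]vdotC.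
    move/eqP; rewrite mulf_eq0 invr_eq0 sqrtr_eq0 lern0 /= addr_eq0 => /eqP ->.
    by rewrite opprK.
  set a := vdot _ _; have := rho_ge0 1%N; have := rho_ge0 i.
  have : 0 <= a ^+ 2 := sqr_ge0 a; nra.
by apply: weighted_amgm; rewrite rho_ge0 rho_dec.
Qed.

Variables (lambda : R) (P : 'M[R]_(m.+1 + k.+1)) (beta : nat -> R).
Hypotheses (rho0_lt_lambda : rho 0%N < lambda) (oP : orthogonalmx P) (P0 : col 0 P = e).
Hypothesis eigM : forall i, invmx (lambda%:M - C) *m col i P = beta i *: col i P.

Lemma form_shifted (x : 'cV[R]_(m.+1 + k.+1)) :
  (x^T *m (lambda%:M - C) *m x) 0 0 = lambda * vdot x x - (x^T *m C *m x) 0 0.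
Proof. by rewrite mulmxBr mulmxBl mul_mx_scalar -scalemxAl !mxE /vdot mxE. Qed.

Lemma shifted_unitmx : lambda%:M - C \in unitmx.
Proof.
apply: form_posdef_unitmx => v v0; rewrite form_shifted.
have gap : 0 < lambda - rho 0%N by rewrite subr_gt0.
have := mulr_gt0 (vdot_gt0 v0) gap; have := form_antidiag_le v; lra.
Qed.

Lemma beta_inv_form (i : 'I_(m.+1 + k.+1)) :
  (beta i)^-1 = ((col i P)^T *m (lambda%:M - C) *m col i P) 0 0.
Proof.
have eigQ : col i P = beta i *: ((lambda%:M - C) *m col i P).
  by rewrite scalemxAr -eigM mulmxA mulmxV ?shifted_unitmx // mul1mx.
have := vdot_cols_orthomx i i oP; rewrite eqxx /vdot {2}eigQ -scalemxAr mxE mulmxA.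
move=> unit_p; have beta_neq0 : beta i != 0.
  by apply: contra_eq_neq unit_p => ->; rewrite mul0r eq_sym oner_eq0.
by apply: (mulfI beta_neq0); rewrite unit_p mulfV.
Qed.

Lemma beta_head_inv : (beta 0%N)^-1 = lambda - rho 0%N.
Proof.
rewrite (beta_inv_form 0) form_shifted P0 form_antidiag_top -P0.
by rewrite vdot_cols_orthomx // eqxx mulr1.
Qed.

Lemma beta_tail_inv (i : 'I_(m.+1 + k.+1)) :
  (0 < i)%N -> lambda - rho 1%N <= (beta i)^-1.
Proof.
move=> i_gt0; rewrite beta_inv_form form_shifted vdot_cols_orthomx // eqxx mulr1.
rewrite lerD2l lerN2.
have orth : vdot (col i P) e = 0.
  by rewrite -P0 vdot_cols_orthomx // -val_eqE /= (gtn_eqF i_gt0).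
by have := form_antidiag_orth_le orth; rewrite vdot_cols_orthomx // eqxx mulr1.
Qed.

Lemma two_beta_tail_le (i : 'I_(m.+1 + k.+1)) :
  lambda - rho 0%N <= rho 0%N - rho 1%N -> (0 < i)%N -> 2 * beta i <= beta 0%N.
Proof.
move=> gap i_gt0; have lt := rho0_lt_lambda; have := beta_tail_inv i_gt0.
rewrite -[beta 0%N]invrK beta_head_inv -[beta i]invrK; set c := (beta i)^-1 => c_ge.
rewrite -[2]invrK -invfM lef_pV2 ?posrE ?subr_gt0 //; lra.
Qed.

End TopSingularPair.

Lemma mul_block_diag (R : ringType) m k (A1 B1 : 'M[R]_m) (A2 B2 : 'M[R]_k) :
  block_mx A1 0 0 A2 *m block_mx B1 0 0 B2 = block_mx (A1 *m B1) 0 0 (A2 *m B2).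
Proof. by rewrite mulmx_block !mulmx0 !mul0mx !addr0 !add0r. Qed.

Section Whitening.
Variables (R : comUnitRingType) (m k : nat) (Sx : 'M[R]_m) (Sy : 'M[R]_k).
Hypotheses (Sx_sym : Sx^T = Sx) (Sy_sym : Sy^T = Sy).
Hypotheses (Sx_unit : Sx \in unitmx) (Sy_unit : Sy \in unitmx).

Lemma block_diag_unitmx : block_mx Sx 0 0 Sy \in unitmx.
Proof. by rewrite unitmxE det_ublock unitrM -!unitmxE Sx_unit Sy_unit. Qed.

Lemma tr_block_diag : (block_mx Sx 0 0 Sy)^T = block_mx Sx 0 0 Sy.
Proof. by rewrite tr_block_mx !trmx0 Sx_sym Sy_sym. Qed.

Lemma whitened_block_form (Sxy : 'M[R]_(m, k)) (lambda : R) :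
  let T := invmx Sx *m Sxy *m invmx Sy in
  block_mx (lambda *: (Sx *m Sx)) (- Sxy) (- Sxy^T) (lambda *: (Sy *m Sy)) =
  block_mx Sx 0 0 Sy *m (lambda%:M - block_mx 0 T T^T 0) *m block_mx Sx 0 0 Sy.
Proof.
move=> T; have STS : Sx *m T *m Sy = Sxy.
  by rewrite /T !mulmxA mulmxV // mul1mx -mulmxA mulVmx // mulmx1.
have STS' : Sy *m T^T *m Sx = Sxy^T by rewrite -STS !trmx_mul Sx_sym Sy_sym !mulmxA.
rewrite (scalar_mx_block m k) opp_block_mx add_block_mx !oppr0 !addr0 !add0r.
rewrite !mulmx_block !mulmx0 !mul0mx !addr0 !add0r !mul_mx_scalar -!scalemxAl.
by rewrite !mulmxN !mulNmx STS STS'.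
Qed.

End Whitening.

Section CoordinatesInEigenbasis.
Variables (R : realType) (n : nat) (P : 'M[R]_n.+1) (beta : nat -> R).
Hypotheses (oP : orthogonalmx P) (beta_gt0 : forall i : 'I_n.+1, 0 < beta i).

Local Notation b := (fun i : 'I_n.+1 => beta i).
Local Notation coords r := (fun i : 'I_n.+1 => vdot r (col i P)).

Lemma vnorm_neq0_of_xi (r : 'cV[R]_n.+1) : xi P r 0 != 0 -> vnorm r != 0.
Proof. by apply: contraNneq => r0; rewrite /xi r0 invr0 mulr0. Qed.

Lemma xi_neq0 (r : 'cV[R]_n.+1) i : vdot r (col i P) != 0 -> xi P r i != 0.
Proof.
move=> z0; have r0 : r != 0 by apply: contraNneq z0 => ->; rewrite /vdot trmx0 mul0mx mxE.
by rewrite /xi mulf_neq0 // invr_neq0 // /vnorm sqrtr_eq0 -ltNge vdot_gt0.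
Qed.

Lemma Gfun_Gratio (r : 'cV[R]_n.+1) :
  xi P r 0 != 0 -> Gfun P beta r = Gratio b (coords r).
Proof.
move=> xi0; rewrite -[RHS](Gratio_scale beta_gt0 _ (invr_neq0 (vnorm_neq0_of_xi xi0))).
by [].
Qed.

Lemma sum_xi_sqr (r : 'cV[R]_n.+1) : vnorm r != 0 -> \sum_i xi P r i ^+ 2 = 1.
Proof.
move=> r0; have rr0 : vdot r r != 0.
  by apply: contraNneq r0; rewrite /vnorm => ->; rewrite sqrtr0.
rewrite /xi; under eq_bigr do rewrite expr_div_n.
by rewrite -mulr_suml -vdot_parseval // sqr_vnorm divff.
Qed.

Lemma abs_sin_angle_le_Gfun (r : 'cV[R]_n.+1) :
  (forall i : 'I_n.+1, beta i <= beta 0%N) -> xi P r 0 != 0 ->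
  `|sin (angle r (col 0 P))| <= Gfun P beta r.
Proof.
move=> beta_le xi0; have unit_xi := sum_xi_sqr (vnorm_neq0_of_xi xi0).
have xi0_le1 : xi P r 0 ^+ 2 <= 1.
  by rewrite -unit_xi sum_ord_head_tail lerDl sumr_ge0 // => i _; rewrite sqr_ge0.
have p0_unit : vnorm (col 0 P) = 1 by rewrite /vnorm vdot_cols_orthomx // eqxx sqrtr1.
rewrite /angle p0_unit mulr1 -/(xi P r 0) sin_acos; last first.
  by rewrite -ler_norml -(expr_le1 (_ : 0 < 2)%N) // real_normK ?num_real.
by rewrite ger0_norm ?sqrtr_ge0 // sqrt_one_sub_le_Gratio.
Qed.

End CoordinatesInEigenbasis.

Lemma le_mul_min_of_sqr (R : realFieldType) (u x y K : R) :
  0 <= x -> 0 <= y -> 0 <= K ->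
  u ^+ 2 <= Num.min (x ^+ 2) (y ^+ 2) * K ^+ 2 -> u <= K * Num.min x y.
Proof.
move=> x_ge0 y_ge0 K_ge0 u2_le; rewrite minr_pMr // le_min.
have le_scaled v : 0 <= v -> u ^+ 2 <= (v * K) ^+ 2 -> u <= K * v.
  move=> v_ge0 le2; rewrite mulrC; apply: le_trans (ler_norm u) _.
  by rewrite -(ler_pXn2r (_ : 0 < 2)%N) ?nnegrE ?mulr_ge0 // real_normK ?num_real.
by rewrite !le_scaled // exprMn (le_trans u2_le) // ler_wpM2r ?sqr_ge0 // ge_min lexx ?orbT.
Qed.

Section WhitenedIteration.
Variables (R : realType) (n : nat) (Q Bh A B P : 'M[R]_n.+1).
Variables (beta : nat -> R) (w : nat -> 'cV[R]_n.+1).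
Hypotheses (Q_sym : Q^T = Q) (Q_unit : Q \in unitmx).
Hypotheses (Bh_sym : Bh^T = Bh) (Bh_unit : Bh \in unitmx).
Hypotheses (AE : A = Bh *m Q *m Bh) (BE : B = Bh *m Bh) (oP : orthogonalmx P).
Hypothesis eigM : forall i, invmx Q *m col i P = beta i *: col i P.
Hypothesis beta_gt0 : forall i : 'I_n.+1, 0 < beta i.
Hypothesis beta_tail : forall i : 'I_n.+1, (0 < i)%N -> beta i <= beta 1%N.
Hypotheses (beta1_ge0 : 0 <= beta 1%N) (beta_gap : 2 * beta 1%N <= beta 0%N).

Local Notation b := (fun i : 'I_n.+1 => beta i).
Local Notation tail := (fun i : 'I_n.+1 => (0 < i)%N).
Local Notation head := (fun i : 'I_n.+1 => (i : nat) == 0%N).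
Local Notation coords v := (fun i : 'I_n.+1 => vdot v (col i P)).
Local Notation r t := (Bh *m w t).
Local Notation wmin t := (invmx A *m B *m w t).
Local Notation residual t := (r t.+1 - invmx Q *m r t).

Hypothesis eps_small : forall t,
  (lsq A B (w t) (w t.+1) - lsq A B (w t) (wmin t)) / ((w t)^T *m B *m w t) 0 0
  <= Num.min (\sum_(i < n.+1 | (0 < (i : nat))%N) xi P (r t) i ^+ 2 / beta i)
             (xi P (r t) 0 ^+ 2 / beta 0%N) * ((beta 0%N - beta 1%N) ^+ 2 / 32).

Lemma lsq_hessian_unitmx : A \in unitmx.
Proof. by rewrite AE !unitmx_mul Bh_unit Q_unit. Qed.

Lemma lsq_hessian_sym : A^T = A.
Proof. by rewrite AE !trmx_mul Bh_sym Q_sym mulmxA. Qed.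

Lemma eigen_of_invmx i : Q *m col i P = (beta i)^-1 *: col i P.
Proof.
have eig : col i P = beta i *: (Q *m col i P).
  by rewrite scalemxAr -eigM mulmxA mulmxV // mul1mx.
by rewrite {2}eig scalerA mulVf ?scale1r ?lt0r_neq0.
Qed.

Lemma coords_power_step t i :
  vdot (r t.+1) (col i P) =
  beta i * vdot (r t) (col i P) + vdot (residual t) (col i P).
Proof.
rewrite -{1}(subrK (invmx Q *m r t) (r t.+1)) vdotDl addrC; congr (_ + _).
by rewrite /vdot trmx_mul trmx_inv Q_sym -mulmxA eigM -scalemxAr mxE.
Qed.

Lemma whitened_minimizer t : Bh *m wmin t = invmx Q *m r t.
Proof.
suff : Q *m (Bh *m wmin t) = r t by move=> <-; rewrite mulKmx.
apply: (can_inj (mulKmx Bh_unit)).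
by rewrite !mulmxA -AE -BE mulmxV ?mul1mx ?lsq_hessian_unitmx.
Qed.

Lemma lsq_excess_coords t :
  lsq A B (w t) (w t.+1) - lsq A B (w t) (wmin t) =
  2^-1 * \sum_i vdot (residual t) (col i P) ^+ 2 / beta i.
Proof.
rewrite lsq_sub_min ?lsq_hessian_sym //; last first.
  by rewrite !mulmxA mulmxV ?lsq_hessian_unitmx // mul1mx.
congr (_ * _).
have -> : (w t.+1 - wmin t)^T *m A *m (w t.+1 - wmin t) =
          (Bh *m (w t.+1 - wmin t))^T *m Q *m (Bh *m (w t.+1 - wmin t)).
  by rewrite AE trmx_mul Bh_sym !mulmxA.
rewrite mulmxBr whitened_minimizer (form_eigenbasis _ oP eigen_of_invmx).
by apply: eq_bigr => i _; rewrite mulrC.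
Qed.

Lemma residual_small t :
  xi P (r t) 0 != 0 ->
  wnorm b predT (coords (residual t)) <=
  (beta 0%N - beta 1%N) / 4 *
  Num.min (wnorm b tail (coords (r t))) (wnorm b head (coords (r t))).
Proof.
move=> xi0; have := eps_small t; rewrite lsq_excess_coords.
set N := vnorm (r t); have N_gt0 : 0 < N.
  by rewrite lt_def sqrtr_ge0 andbT; apply: vnorm_neq0_of_xi xi0.
have -> : ((w t)^T *m B *m w t) 0 0 = N ^+ 2.
  by rewrite sqr_vnorm /vdot BE trmx_mul Bh_sym !mulmxA.
have wnorm_xi J : wnorm b J (xi P (r t)) = wnorm b J (coords (r t)) / N.
  rewrite -[xi P (r t)]/(fun i => vdot (r t) (col i P) * N^-1) wnormMr //.
  by rewrite ger0_norm ?invr_ge0 ?(ltW N_gt0).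
rewrite -(sqr_wnorm beta_gt0 tail) -(sqr_wnorm_head beta_gt0) !wnorm_xi !expr_div_n.
rewrite -minr_pMl ?invr_ge0 ?sqr_ge0 // -(sqr_wnorm beta_gt0 predT) => eps_le.
apply: le_mul_min_of_sqr; rewrite ?sqrtr_ge0 ?divr_ge0 ?subr_ge0 //.
  by have := beta_gap; have := beta1_ge0; lra.
move: eps_le; set u := wnorm _ _ _; set m := Num.min _ _; set D := beta 0%N - beta 1%N.
rewrite [leRHS]mulrAC ler_pM2r ?invr_gt0 ?exprn_gt0 //.
have -> : m * (D / 4) ^+ 2 = 2 * (m * (D ^+ 2 / 32)) by field.
lra.
Qed.

Lemma Gfun_step t :
  xi P (r t) 0 != 0 ->
  xi P (r t.+1) 0 != 0 /\ Gfun P beta (r t.+1) <= 5 / 7 * Gfun P beta (r t).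
Proof.
move=> xi0; have z0 : vdot (r t) (col 0 P) != 0.
  by apply: contraNneq xi0; rewrite /xi => ->; rewrite mul0r.
have [z'0 contract] :=
  Gratio_contract beta_gt0 beta1_ge0 beta_tail beta_gap z0 (residual_small xi0).
have xi'0 : xi P (r t.+1) 0 != 0 by rewrite xi_neq0 // coords_power_step.
have step : (fun i : 'I_n.+1 => beta i * vdot (r t) (col i P) + vdot (residual t) (col i P))
            = coords (r t.+1).
  by apply: funext => i; rewrite coords_power_step.
by rewrite !Gfun_Gratio // -step.
Qed.

Lemma Gfun_geometric :
  xi P (r 0%N) 0 != 0 ->
  forall t, xi P (r t) 0 != 0 /\ Gfun P beta (r t) <= (5 / 7) ^+ t * Gfun P beta (r 0%N).
Proof.
move=> xi0; elim=> [|t [xit Gt]]; first by rewrite expr0 mul1r.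
have [xit' Gt'] := Gfun_step xit; split => //.
by rewrite exprS -mulrA (le_trans Gt') //; apply: ler_wpM2l.
Qed.

End WhitenedIteration.

Lemma geometric_le_after_ceil_log (R : realType) (a G eta : R) (t : nat) :
  1 < a -> 0 <= G -> 0 < eta -> Num.ceil (ln (G / eta) / ln a) <= t%:Z ->
  a^-1 ^+ t * G <= eta.
Proof.
move=> a_gt1 G_ge0 eta_gt0 ceil_le; have a_gt0 : 0 < a by lra.
have [G0|G_gt0] := eqVneq G 0; first by rewrite G0 mulr0 (ltW eta_gt0).
have {}G_gt0 : 0 < G by rewrite lt_def G_gt0.
have : ln (G / eta) <= ln (a ^+ t).
  rewrite lnXn // -mulr_natl -ler_pdivrMr ?ln_gt0 //.
  by apply: le_trans (ceil_ge _) _; rewrite pmulrn ler_int.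
rewrite ler_ln ?posrE ?divr_gt0 ?exprn_gt0 // ler_pdivrMr // => G_le.
by rewrite exprVn ler_pdivrMl ?exprn_gt0 // mulrC.
Qed.

Theorem lemma5 (R : realType) (N dx dy : nat)
  (x : 'I_N -> 'cV[R]_dx.+1) (y : 'I_N -> 'cV[R]_dy.+1)
  (* Sx = Sigma_xx^{1/2}, Sy = Sigma_yy^{1/2} *)
  (Sx : 'M[R]_dx.+1) (Sy : 'M[R]_dy.+1)
  (U : 'M[R]_dx.+1) (V : 'M[R]_dy.+1) (rho : nat -> R)
  (lambda l u eta : R)
  (P : 'M[R]_(dx.+1 + dy.+1)) (beta : nat -> R)
  (w : nat -> 'cV[R]_(dx.+1 + dy.+1)) :
  let Sxx := covmx x x in
  let Syy := covmx y y in
  let Sxy := covmx x y in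
  posdef Sxx -> posdef Syy ->
  is_sqrtmx Sxx Sx -> is_sqrtmx Syy Sy ->
  let T := invmx Sx *m Sxy *m invmx Sy in
  is_svd T U V rho ->
  let Delta := rho 0%N - rho 1%N in
  0 < Delta ->
  let a1 := col 0 U in
  let b1 := col 0 V in
  let uh := invmx Sx *m a1 in
  let vh := invmx Sy *m b1 in
  0 < l -> l < u -> u < 1 ->
  l * Delta <= lambda - rho 0%N <= u * Delta ->
  let C := block_mx 0 T T^T 0 in
  let M := invmx (lambda%:M - C) in
  let A := block_mx (lambda *: Sxx) (- Sxy) (- Sxy^T) (lambda *: Syy) in
  let B := block_mx Sxx 0 0 Syy in
  let Bh := block_mx Sx 0 0 Sy in
  let rh := (Num.sqrt 2)^-1 *: col_mx (Sx *m uh) (Sy *m vh) in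
  (* beta_1 >= ... >= beta_d > 0 eigenvalues of M, orthonormal eigenvectors
     p_i = col i P, with p_1 = rh *)
  orthogonalmx P ->
  (forall i : 'I_(dx.+1 + dy.+1), M *m col i P = beta i *: col i P) ->
  (forall i j : 'I_(dx.+1 + dy.+1), (i <= j)%N -> beta j <= beta i) ->
  (forall i : 'I_(dx.+1 + dy.+1), 0 < beta i) ->
  col 0 P = rh ->
  0 < eta < 1 ->
  let r := fun t => Bh *m w t in
  xi P (r 0%N) 0 != 0 ->
  (forall t : nat,
     let f := lsq A B (w t) in
     let fstar := f (invmx A *m B *m w t) in
     let eps := (f (w t.+1) - fstar) / ((w t)^T *m B *m w t) 0 0 in
     eps <= Num.min
              (\sum_(i < dx.+1 + dy.+1 | (0 < (i : nat))%N)
                  xi P (r t) i ^+ 2 / beta i)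
              (xi P (r t) 0 ^+ 2 / beta 0%N)
            * ((beta 0%N - beta 1%N) ^+ 2 / 32)) ->
  let Tn := Num.ceil (ln (Gfun P beta (r 0%N) / eta) / ln (7 / 5 : R)) in
  forall t : nat, Tn <= t%:Z ->
    `|sin (angle (r t) rh)| <= Gfun P beta (r t) /\ Gfun P beta (r t) <= eta.
Proof.
move=> Sxx Syy Sxy _ _ [[Sx_sym Sx_pos] Sx2] [[Sy_sym Sy_pos] Sy2] T svdT Delta.
move=> Delta_gt0 a1 b1 uh vh l_gt0 _ u_lt1 /andP[lower upper] C M A B Bh rh.
move=> oP eigM beta_sorted beta_gt0 P0 /andP[eta_gt0 _] r xi0 eps_small Tn t Tn_le.
have Sx_unit : Sx \in unitmx := form_posdef_unitmx Sx_pos.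
have Sy_unit : Sy \in unitmx := form_posdef_unitmx Sy_pos.
have rho0_lt : rho 0%N < lambda by have := mulr_gt0 l_gt0 Delta_gt0; lra.
have gap : lambda - rho 0%N <= rho 0%N - rho 1%N.
  by have := ler_piMl (ltW Delta_gt0) (ltW u_lt1); rewrite /Delta in upper *; lra.
have rhE : rh = (Num.sqrt 2)^-1 *: col_mx (col 0 U) (col 0 V).
  by rewrite /rh /uh /vh !mulmxA !mulmxV // !mul1mx.
rewrite rhE in P0 *.
have d_gt1 : (1 < dx.+1 + dy.+1)%N by rewrite addnS ltnS addSn.
pose i1 := Ordinal d_gt1.
have AE : A = Bh *m (lambda%:M - C) *m Bh by rewrite /A -Sx2 -Sy2 whitened_block_form.
have BE : B = Bh *m Bh by rewrite /B /Bh mul_block_diag Sx2 Sy2.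
have Q_sym : (lambda%:M - C)^T = lambda%:M - C.
  by rewrite linearB /= tr_scalar_mx tr_block_antidiag.
have beta_tail (i : 'I_(dx.+1 + dy.+1)) : (0 < i)%N -> beta i <= beta 1%N.
  exact: beta_sorted i1 i.
have [xit Gt] := Gfun_geometric Q_sym (shifted_unitmx svdT rho0_lt)
  (tr_block_diag Sx_sym Sy_sym) (block_diag_unitmx Sx_unit Sy_unit) AE BE oP eigM
  beta_gt0 beta_tail (ltW (beta_gt0 i1))
  (two_beta_tail_le (i := i1) svdT rho0_lt oP P0 eigM gap isT)
  eps_small xi0 t.
split; first by rewrite -P0; apply: abs_sin_angle_le_Gfun => // i; apply: (beta_sorted 0).
apply: le_trans Gt _; have -> : (5 / 7 : R) = (7 / 5)^-1 by rewrite invf_div.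
by apply: geometric_le_after_ceil_log; rewrite ?divr_ge0 ?sqrtr_ge0 //; lra.
Qed.
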